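(* Let $G$ be a connected cograph which is $k$-connected, and let $S$ be a minimal vertex separator of $G$ with $|S|=k$. Then every vertex $v\in V(G)\setminus S$ is adjacent to every vertex of $S$.
   Context: A cograph is a graph that can be built from single vertices by repeatedly taking disjoint unions and joins; equivalently, a graph with no induced path on four vertices. A vertex separator of a connected graph $G$ is a set $S\subset V(G)$ such that the subgraph induced on $V(G)\setminus S$ is disconnected; it is minimal if no proper subset of $S$ is a vertex separator; a minimum vertex separator is a minimal vertex separator of least size. The paper calls $G$ $k$-connected if there exists a minimum vertex separator of size $k$. *)

From mathcomp Require Import all_boot.
Set Implicit Arguments. Unset Strict Implicit. Unset Printing Implicit Defensive.

Definition simple_graph (T : finType) (e : rel T) : Prop :=
  symmetric e /\ irreflexive e.

Definition induced_rel (T : finType) (e : rel T) (A : {set T}) : rel T :=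
  [rel x y | [&& x \in A, y \in A & e x y]].

Definition connected_on (T : finType) (e : rel T) (A : {set T}) : Prop :=
  A != set0 /\ forall x y, x \in A -> y \in A -> connect (induced_rel e A) x y.

Definition disconnected_on (T : finType) (e : rel T) (A : {set T}) : Prop :=
  exists x y, [/\ x \in A, y \in A & ~~ connect (induced_rel e A) x y].

Definition connected_graph (T : finType) (e : rel T) : Prop :=
  connected_on e [set: T].

Definition cograph (T : finType) (e : rel T) : Prop :=
  ~ exists a b c d : T,
      [/\ e a b, e b c, e c d, ~~ e a c & ~~ e b d] /\ ~~ e a d.

Definition vertex_separator (T : finType) (e : rel T) (S : {set T}) : Prop :=
  disconnected_on e (~: S).

Definition minimal_vertex_separator (T : finType) (e : rel T) (S : {set T}) : Prop :=
  vertex_separator e S /\ forall S' : {set T}, S' \proper S -> ~ vertex_separator e S'.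

Definition minimum_vertex_separator (T : finType) (e : rel T) (S : {set T}) : Prop :=
  minimal_vertex_separator e S /\
  forall S' : {set T}, minimal_vertex_separator e S' -> #|S| <= #|S'|.

(* The paper's notion: G is k-connected iff some minimum vertex separator has size k. *)
Definition k_connected (T : finType) (e : rel T) (k : nat) : Prop :=
  exists S, minimum_vertex_separator e S /\ #|S| = k.

From mathcomp Require Import all_boot.
Set Implicit Arguments. Unset Strict Implicit. Unset Printing Implicit Defensive.

(* Suppose v lies outside the minimal separator S but is not adjacent to s in S.
   By minimality, s has a neighbour in every component of G - S; in particular a
   path inside the component of v runs from v to a neighbour of s, so it has an
   edge a b' with a not adjacent and b' adjacent to s.  A neighbour w of s in
   another component then makes a - b' - s - w an induced P4. *)

Lemma connect_exit_edge (T : finType) (r : rel T) (X : pred T) x y :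
  connect r x y -> X x -> ~~ X y -> exists x' y', [/\ X x', ~~ X y' & r x' y'].
Proof.
move/connectP=> [p]; elim: p x => [|z p IH] x /=; first by move=> _ -> ->.
case/andP=> rxz pz ly Xx nXy.
have [Xz | nXz] := boolP (X z); first exact: IH pz ly Xz nXy.
by exists x, z.
Qed.

Section Separators.

Variables (T : finType) (e : rel T).
Hypothesis e_sym : symmetric e.

Local Notation linked A := (connect (induced_rel e A)).

Lemma linked_sym (A : {set T}) : connect_sym (induced_rel e A).
Proof. by apply: sym_connect_sym => a b; rewrite /induced_rel /= e_sym andbCA. Qed.

Lemma linked_edge (A : {set T}) u z w :
  linked A u z -> z \in A -> w \in A -> e z w -> linked A u w.
Proof.
by move=> uz zA wA ezw; apply: connect_trans uz (connect1 _); rewrite /induced_rel /= zA wA.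
Qed.

Lemma linked_mem (A : {set T}) u z : u \in A -> linked A u z -> z \in A.
Proof.
move=> uA uz; apply/negPn/negP => zA.
have [x' [y' [_ y'A /and3P [_ y'A' _]]]] := connect_exit_edge uz uA zA.
by case/negP: y'A.
Qed.

Lemma separator_unlinked (S : {set T}) u :
  vertex_separator e S -> exists2 w, w \in ~: S & ~~ linked (~: S) u w.
Proof.
move=> [x [y [xS yS nxy]]].
have [ux | nux] := boolP (linked (~: S) u x); last by exists x.
exists y => //; apply: contra nxy => uy.
by apply: connect_trans uy; rewrite linked_sym.
Qed.

Lemma nonseparator_linked (S : {set T}) x y :
  ~ vertex_separator e S -> x \in ~: S -> y \in ~: S -> linked (~: S) x y.
Proof. by move=> nsep xS yS; apply/negPn/negP => nxy; apply: nsep; exists x, y. Qed.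

(* S :\ s is not a separator, so u and w are linked through G - (S :\ s); such a
   path has to leave the component of u in G - S, and it can only do so at s. *)
Lemma minimal_separator_neighbor (S : {set T}) s u w :
  minimal_vertex_separator e S -> s \in S -> u \in ~: S -> w \in ~: S ->
  ~~ linked (~: S) u w -> exists2 b, linked (~: S) u b & e b s.
Proof.
move=> [_ Smin] sS uS wS nuw.
have inB z : (z \in ~: (S :\ s)) = (z \in ~: S) || (z == s).
  by rewrite !in_setC in_setD1 negb_and negbK orbC.
have properS : S :\ s \proper S by rewrite properD1.
have uwB : linked (~: (S :\ s)) u w.
  by apply: nonseparator_linked (Smin _ properS) _ _; rewrite inB ?uS ?wS.
have [x [y [ux nuy /and3P [_ yB exy]]]] := connect_exit_edge uwB (connect0 _ u) nuw.
have xS := linked_mem uS ux.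
have [yS | yS] := boolP (y \in ~: S); first by rewrite (linked_edge ux) in nuy.
by move: yB; rewrite inB (negbTE yS) => /eqP <-; exists x.
Qed.

Lemma linked_boundary_edge (A : {set T}) s v b :
  linked A v b -> ~~ e v s -> e b s ->
  exists a b', [/\ linked A v a, linked A v b', e a b', ~~ e a s & e b' s].
Proof.
move=> vb nvs ebs.
pose X := [pred z | linked A v z && ~~ e z s].
have Xv : X v by rewrite /= connect0.
have nXb : ~~ X b by rewrite /= ebs andbF.
have [a [b' [/andP [va nas] nXb' ab']]] := connect_exit_edge vb Xv nXb.
have vb' : linked A v b' := connect_trans va (connect1 ab').
move: ab' nXb' => /and3P [_ _ eab']; rewrite /= vb' negbK => eb's.
by exists a, b'.
Qed.

Lemma cograph_minimal_separator_complete (S : {set T}) v s :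
  cograph e -> minimal_vertex_separator e S -> v \notin S -> s \in S -> e v s.
Proof.
move=> cog Smin vS sS; apply/negPn/negP => nvs.
have vS' : v \in ~: S by rewrite in_setC.
have [w0 w0S nvw0] := separator_unlinked v Smin.1.
have [b vb ebs] := minimal_separator_neighbor Smin sS vS' w0S nvw0.
have [|w w0w ews] := minimal_separator_neighbor Smin sS w0S vS' _.
  by rewrite linked_sym.
have wS := linked_mem w0S w0w.
have nvw : ~~ linked (~: S) v w.
  by apply: contra nvw0 => vw; apply: connect_trans vw _; rewrite linked_sym.
have far z : linked (~: S) v z -> ~~ e z w.
  by move=> vz; apply: contra nvw; apply: linked_edge vz (linked_mem vS' vz) wS.
have [a [b' [va vb' eab' nas eb's]]] := linked_boundary_edge vb nvs ebs.
by apply: cog; exists a, b', s, w; rewrite !far // (e_sym s).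
Qed.

End Separators.

Theorem corollary2 (T : finType) (e : rel T) (k : nat) (S : {set T}) :
  simple_graph e -> connected_graph e -> cograph e -> k_connected e k ->
  minimal_vertex_separator e S -> #|S| = k ->
  forall v s, v \notin S -> s \in S -> e v s.
Proof.
move=> [e_sym _] _ cog _ Smin _ v s.
exact: (cograph_minimal_separator_complete e_sym cog Smin).
Qed.
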